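(* Let $M$ be a smooth manifold, $(\mathbf{J}_1,\mathbf{J}_2)$ a generalized Kähler structure with associated bihermitian data $(g,b,I,J)$, and $K\in\Lambda^2T^*M$ a real 2-form. Then $[\Phi_K(\mathbf{J}_1),\mathbf{J}_2]=[\Phi_K(\mathbf{J}_2),\mathbf{J}_1]$ if and only if $K\in\Lambda^{1,1}_J$ (equivalently $KJ=-J^*K$ as maps $T\to T^*$).
   Context: A generalized Kähler structure is a pair of commuting integrable generalized complex structures $(\mathbf{J}_1,\mathbf{J}_2)$ on $T\oplus T^*$ (w.r.t. an $H$-twisted Courant bracket) such that $\langle -\mathbf{J}_1\mathbf{J}_2\cdot,\cdot\rangle$ is positive definite, $\langle X+\xi,Y+\eta\rangle=\tfrac12(\xi(Y)+\eta(X))$. It corresponds to bihermitian data $(g,b,I,J)$ via the Gualtieri map $\mathbf{J}_{1/2}=\tfrac12 e^b\begin{pmatrix} I\pm J & -(\omega_I^{-1}\mp\omega_J^{-1})\\ \omega_I\mp\omega_J & -(I^*\pm J^* )\end{pmatrix}e^{-b}$, with $\omega_I=gI$, $\omega_J=gJ$ as maps $T\to T^*$. For a 2-form $K$, $e^K(X+\xi)=X+\xi+K(X,\cdot)$ and $\Phi_K(\mathbf{J})=[\mathbf{J},e^K\mathbf{J}]$. $\Lambda^{1,1}_J$ is the space of real 2-forms with $K(JX,JY)=K(X,Y)$. *)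

(* Pointwise (linear-algebra) model of T ⊕ T^* at a point:
   T = column vectors 'cV[R]_n, T^* = column vectors 'cV[R]_n with pairing
   xi(Y) = xi^T Y.  Endomorphisms of T ⊕ T^* are block matrices in 'M_(n+n)
   acting on col_mx X xi. *)
From HB Require Import structures.
From mathcomp Require Import all_boot all_order all_algebra.
Set Implicit Arguments. Unset Strict Implicit. Unset Printing Implicit Defensive.
Import Order.TTheory GRing.Theory Num.Theory.
Local Open Scope ring_scope.

Section Defs.
Variables (R : realFieldType) (n : nat).

Definition form (B : 'M[R]_n) (x y : 'cV[R]_n) : R := ((x^T *m B *m y) 0 0).

(* the map T -> T^*, X |-> B(X, .) ; its matrix is B^T *)
Definition flat (B : 'M[R]_n) : 'M[R]_n := B^T.

Definition gsymmetric (B : 'M[R]_n) := forall x y, form B x y = form B y x.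
Definition gskew (B : 'M[R]_n) := forall x y, form B x y = - form B y x.
Definition gposdef (B : 'M[R]_n) := forall x : 'cV[R]_n, x != 0 -> 0 < form B x x.
Definition almost_complex (A : 'M[R]_n) := A *m A = - 1%:M.
Definition compatible (G A : 'M[R]_n) :=
  forall x y, form G (A *m x) (A *m y) = form G x y.

Definition eB (K : 'M[R]_n) : 'M[R]_(n + n) := block_mx 1%:M 0 (flat K) 1%:M.

(* Gualtieri map; s = true gives J_1 (upper signs), s = false gives J_2 *)
Definition gualtieri (s : bool) (G b I J : 'M[R]_n) : 'M[R]_(n + n) :=
  let sg : R := if s then 1 else -1 in
  let wI := flat G *m I in
  let wJ := flat G *m J in
  (2%:R^-1) *:
  (eB b *m
   block_mx (I + sg *: J) (- (invmx wI - sg *: invmx wJ))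
            (wI - sg *: wJ) (- (I^T + sg *: J^T))
   *m eB (- b)).

Definition commutator (A B : 'M[R]_(n + n)) := A *m B - B *m A.

(* Phi_K(J) = [J, e^K J], e^K J being the composite e^K o J *)
Definition PhiK (K : 'M[R]_n) (JJ : 'M[R]_(n + n)) :=
  commutator JJ (eB K *m JJ).

Definition in_Lambda11 (J K : 'M[R]_n) :=
  forall x y, form K (J *m x) (J *m y) = form K x y.

End Defs.

From mathcomp Require Import all_boot all_order all_algebra ring.
Set Implicit Arguments. Unset Strict Implicit. Unset Printing Implicit Defensive.
Import Order.TTheory GRing.Theory Num.Theory.
Local Open Scope ring_scope.

(* Everything is pointwise linear algebra on T ⊕ T^*.
   1. Translate the tensorial hypotheses into matrix identities:
      G^T = G, K^T = -K, P^T G P = G, and G is invertible.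
   2. Conjugating by the frame  X = e^b diag(1, G)  turns the Gualtieri
      matrices into  J_s = 1/2 X M_s X^-1, where M_s is the block matrix
      [[I ± J, I ∓ J], [I ∓ J, I ± J]], and turns e^K into 1 + N with the
      nilpotent block N = [[0, 0], [G^-1 K^T, 0]].  Commutators and Phi are
      equivariant under conjugation, so the theorem reduces to the model.
   3. In the model, M_+^2 = M_-^2 = -4 and M_+ M_- = M_- M_+, so a
      general ring identity computes the difference of the two brackets,
      which comes out as 8 [J, G^-1 K^T] in every block.
   4. Finally, J commutes with G^-1 K exactly when J^T K J = K, i.e. when
      K is of type (1,1) with respect to J. *)

Section FormsAsMatrices.
Variables (R : realFieldType) (n : nat).
Implicit Types (A B P : 'M[R]_n).

Lemma form_inj A B : (forall x y, form A x y = form B x y) -> A = B.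
Proof.
move=> eqAB; apply/matrixP => i j.
have := eqAB (delta_mx i 0) (delta_mx j 0).
by rewrite /form trmx_delta -rowE -colE -rowE -colE !mxE.
Qed.

Lemma form_swap A (x y : 'cV[R]_n) : form A y x = form A^T x y.
Proof.
have tr11 (M : 'M[R]_1) : M 0 0 = M^T 0 0 by rewrite mxE.
by rewrite /form tr11 !trmx_mul trmxK mulmxA.
Qed.

Lemma formN A (x y : 'cV[R]_n) : form (- A) x y = - form A x y.
Proof. by rewrite /form mulmxN mulNmx mxE. Qed.

Lemma form_pullback A P (x y : 'cV[R]_n) :
  form A (P *m x) (P *m y) = form (P^T *m A *m P) x y.
Proof. by rewrite /form trmx_mul !mulmxA. Qed.

Lemma gsymmetric_trmx A : gsymmetric A -> A^T = A.
Proof. by move=> symA; apply: form_inj => x y; rewrite -form_swap symA. Qed.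

Lemma gskew_trmx A : gskew A -> A^T = - A.
Proof. by move=> skA; apply: form_inj => x y; rewrite -form_swap formN skA. Qed.

Lemma compatible_mx A P : compatible A P -> P^T *m A *m P = A.
Proof. by move=> cAP; apply: form_inj => x y; rewrite -form_pullback cAP. Qed.

Lemma in_Lambda11_mx P K : in_Lambda11 P K <-> P^T *m K *m P = K.
Proof.
split=> [inv | eqK]; last by move=> x y; rewrite form_pullback eqK.
by apply: form_inj => x y; rewrite -form_pullback inv.
Qed.

(* A positive definite form is nondegenerate: a kernel vector v would
   give g(v, v) = 0. *)
Lemma gposdef_unit A : gposdef A -> A \in unitmx.
Proof.
move=> posA; rewrite -row_free_unit -kermx_eq0; apply/negPn/negP => nz.
have [i hi] : exists i, row i (kermx A) != 0.
  apply/existsP; apply: contraR nz; rewrite negb_exists => /forallP hr.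
  by apply/eqP/row_matrixP => i; rewrite row0; apply/eqP; have := hr i; rewrite negbK.
have hv : row i (kermx A) *m A = 0 by rewrite -row_mul mulmx_ker row0.
have := posA (row i (kermx A))^T.
by rewrite trmx_eq0 hi => /(_ isT); rewrite /form trmxK hv mul0mx mxE ltxx.
Qed.

Lemma invmx_eq A B : A *m B = 1%:M -> invmx A = B.
Proof.
move=> AB; have [uA _] := mulmx1_unit AB.
by rewrite -[invmx A]mulmx1 -AB mulmxA mulVmx // mul1mx.
Qed.

End FormsAsMatrices.

Section CompatibleStructure.
Variables (R : realFieldType) (n : nat) (G P : 'M[R]_n).
Hypotheses (uG : G \in unitmx) (sqP : P *m P = - 1%:M)
  (compP : P^T *m G *m P = G).

Lemma trmx_compatible : P^T = - (G *m P *m invmx G).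
Proof.
have PTG : P^T *m G = G *m (- P).
  by rewrite -[in RHS]compP -!mulmxA mulmxN sqP opprK mulmx1.
by rewrite -[P^T](mulmxK uG) PTG mulmxN mulNmx.
Qed.

Lemma invmx_omega : invmx (G *m P) = - (P *m invmx G).
Proof.
apply: invmx_eq.
by rewrite mulmxN !mulmxA -(mulmxA G P P) sqP mulmxN mulmx1 mulNmx opprK mulmxV.
Qed.

End CompatibleStructure.

Section Brackets.
Variables (R : realFieldType) (n : nat).
Implicit Types (X Y E P A B N : 'M[R]_(n + n)).

Definition PhiE E P := commutator P (E *m P).

Lemma mulmx_conj X Y A B : Y *m X = 1%:M ->
  (X *m A *m Y) *m (X *m B *m Y) = X *m (A *m B) *m Y.
Proof. by move=> YX; rewrite !mulmxA -(mulmxA _ Y X) YX mulmx1. Qed.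

Lemma commutator_conj X Y A B : Y *m X = 1%:M ->
  commutator (X *m A *m Y) (X *m B *m Y) = X *m commutator A B *m Y.
Proof. by move=> YX; rewrite /commutator !mulmx_conj // mulmxBr mulmxBl. Qed.

Lemma PhiE_conj X Y E P : Y *m X = 1%:M ->
  PhiE (X *m E *m Y) (X *m P *m Y) = X *m PhiE E P *m Y.
Proof. by move=> YX; rewrite /PhiE mulmx_conj // commutator_conj. Qed.

Lemma commutator_scale (c d : R) A B :
  commutator (c *: A) (d *: B) = (c * d) *: commutator A B.
Proof.
rewrite /commutator -!scalemxAl -!scalemxAr !scalerA scalerBr.
by rewrite (mulrC d c).
Qed.

Lemma PhiE_scale (c : R) E P : PhiE E (c *: P) = (c * c) *: PhiE E P.
Proof. by rewrite /PhiE -scalemxAr commutator_scale. Qed.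

Lemma scaled_conj_eq (c : R) X Y A B : c != 0 -> Y *m X = 1%:M ->
  c *: (X *m A *m Y) = c *: (X *m B *m Y) <-> A = B.
Proof.
move=> c0 YX; split=> [/(scalerI c0) eqAB | -> //].
have : Y *m (X *m A *m Y) *m X = Y *m (X *m B *m Y) *m X by rewrite eqAB.
by rewrite !mulmxA YX !mul1mx -!mulmxA YX !mulmx1.
Qed.

Lemma PhiE_unipotent N P (c : R) : P *m P = c%:M ->
  PhiE (1%:M + N) P = P *m N *m P - c *: N.
Proof.
move=> sqP; rewrite /PhiE /commutator mulmxDl mul1mx mulmxDr mulmxDl.
rewrite -(mulmxA N P P) sqP mul_mx_scalar mulmxA.
by rewrite opprD addrACA subrr add0r.
Qed.

Lemma PhiE_bracket_asymmetry N P1 P2 C (c : R) :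
  P1 *m P1 = c%:M -> P2 *m P2 = c%:M -> P1 *m P2 = C -> P2 *m P1 = C ->
  commutator (PhiE (1%:M + N) P1) P2 - commutator (PhiE (1%:M + N) P2) P1
  = (P1 - P2) *m N *m (C - c%:M) - (C - c%:M) *m N *m (P1 - P2).
Proof.
move=> sq1 sq2 P12 P21.
rewrite (PhiE_unipotent _ sq1) (PhiE_unipotent _ sq2) /commutator.
rewrite !mulmxBl !mulmxBr !mulmxA.
rewrite -(mulmxA (P1 *m N) P1 P2) -(mulmxA (P2 *m N) P2 P1) !P12 !P21.
rewrite !mul_mx_scalar !mul_scalar_mx -!scalemxAl -!scalemxAr.
by apply/matrixP => i j; rewrite !mxE; ring.
Qed.

End Brackets.

Section GualtieriModel.
Variables (R : realFieldType) (n : nat).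
Implicit Types (I J H : 'M[R]_n).

Definition sgn (s : bool) : R := if s then 1 else -1.

(* Twice the Gualtieri matrix J_1 (s = true) or J_2 (s = false), written
   in the frame e^b diag(1, G). *)
Definition gmodel I J s : 'M[R]_(n + n) :=
  block_mx (I + sgn s *: J) (I - sgn s *: J) (I - sgn s *: J) (I + sgn s *: J).

(* The nilpotent part of e^K in that frame. *)
Definition lower_mx H : 'M[R]_(n + n) := block_mx 0 0 H 0.

Section ModelAlgebra.
Variables (I J : 'M[R]_n).
Hypotheses (sqI : I *m I = - 1%:M) (sqJ : J *m J = - 1%:M).

(* J_s^2 = -1 becomes M_s^2 = -4 in the model. *)
Lemma gmodel_sq s : gmodel I J s *m gmodel I J s = (- 4%:R)%:M.
Proof.
rewrite /gmodel mulmx_block (scalar_mx_block n n).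
rewrite ?mulmxDl ?mulmxBl ?mulmxDr ?mulmxBr ?mulNmx ?mulmxN -?scalemxAl -?scalemxAr sqI sqJ.
by case: s; rewrite /sgn; congr block_mx; apply/matrixP => i j;
  rewrite !mxE; case: (i == j); ring.
Qed.

(* The two model matrices commute: both products are the same block matrix. *)
Lemma gmodel_prod s :
  gmodel I J s *m gmodel I J (~~ s) = block_mx 0 (- 4%:R)%:M (- 4%:R)%:M 0.
Proof.
rewrite /gmodel mulmx_block.
rewrite ?mulmxDl ?mulmxBl ?mulmxDr ?mulmxBr ?mulNmx ?mulmxN -?scalemxAl -?scalemxAr sqI sqJ.
by case: s; rewrite /sgn /=; congr block_mx; apply/matrixP => i j;
  rewrite !mxE; case: (i == j); ring.
Qed.

Lemma gmodel_bracket_asymmetry H :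
  let E := 1%:M + lower_mx H in
  let D := J *m H - H *m J in
  commutator (PhiE E (gmodel I J true)) (gmodel I J false)
  - commutator (PhiE E (gmodel I J false)) (gmodel I J true)
  = block_mx ((- 8%:R) *: D) (8%:R *: D) (8%:R *: D) ((- 8%:R) *: D).
Proof.
rewrite /= (PhiE_bracket_asymmetry _ (gmodel_sq true) (gmodel_sq false)
  (gmodel_prod true) (gmodel_prod false)).
rewrite /gmodel /lower_mx /sgn (scalar_mx_block n n) !opp_block_mx !add_block_mx !mulmx_block.
do 3 rewrite ?mulmx0 ?mul0mx ?mulmxDl ?mulmxBl ?mulmxDr ?mulmxBr ?mulNmx ?mulmxN
  ?mul_mx_scalar ?mul_scalar_mx -?scalemxAl -?scalemxAr ?opp_block_mx ?add_block_mx.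
by congr block_mx; apply/matrixP => i j; rewrite !mxE; ring.
Qed.

Lemma gmodel_bracket_symmetric_iff H :
  let E := 1%:M + lower_mx H in
  commutator (PhiE E (gmodel I J true)) (gmodel I J false)
  = commutator (PhiE E (gmodel I J false)) (gmodel I J true)
  <-> J *m H = H *m J.
Proof.
move=> E; have asym := gmodel_bracket_asymmetry H; cbv zeta in asym.
split => [eqL | commJH]; last first.
  by apply/eqP; rewrite -subr_eq0 asym commJH subrr !scaler0 block_mx0.
move: asym; rewrite eqL subrr -(block_mx0 _ n n n n) => /esym/eq_block_mx [D0 _ _ _].
by apply/eqP; move/eqP: D0; rewrite scalemx_eq0 oppr_eq0 pnatr_eq0 /= subr_eq0.
Qed.

End ModelAlgebra.
End GualtieriModel.

Section Frame.
Variables (R : realFieldType) (n : nat).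
Implicit Types (G b K I J : 'M[R]_n).

Lemma eBD K1 K2 : eB K1 *m eB K2 = eB (K1 + K2) :> 'M[R]_(n + n).
Proof.
rewrite /eB mulmx_block !mul1mx !mulmx0 !mul0mx !mulmx1 !addr0 !add0r.
by congr block_mx; rewrite /flat; apply/matrixP => i j; rewrite !mxE.
Qed.

Lemma eB0 : eB 0 = 1%:M :> 'M[R]_(n + n).
Proof. by rewrite /eB /flat trmx0 -scalar_mx_block. Qed.

Definition metric_mx G : 'M[R]_(n + n) := block_mx 1%:M 0 0 G.
Definition frame G b := eB b *m metric_mx G.
Definition coframe G b := metric_mx (invmx G) *m eB (- b).

Lemma metric_mxK G G' : G' *m G = 1%:M -> metric_mx G' *m metric_mx G = 1%:M.
Proof.
move=> GG'; rewrite /metric_mx mulmx_block !mulmx0 !mul0mx !mulmx1 !addr0 add0r.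
by rewrite GG' -scalar_mx_block.
Qed.

Lemma coframeK G b : G \in unitmx -> coframe G b *m frame G b = 1%:M.
Proof.
move=> uG; rewrite /coframe /frame mulmxA -(mulmxA _ (eB (- b))) eBD addNr eB0.
by rewrite mulmx1 metric_mxK // mulVmx.
Qed.

Lemma frameK G b : G \in unitmx -> frame G b *m coframe G b = 1%:M.
Proof.
move=> uG; rewrite /frame /coframe mulmxA -(mulmxA (eB b)) metric_mxK ?mulmxV //.
by rewrite mulmx1 eBD addrN eB0.
Qed.

Lemma eB_coframe G b K : G \in unitmx ->
  coframe G b *m eB K *m frame G b = 1%:M + lower_mx (invmx G *m K^T).
Proof.
move=> uG; rewrite /coframe /frame -!mulmxA (mulmxA (eB K)) eBD.
rewrite (mulmxA (eB (- b))) eBD (addrC K) addKr /lower_mx /metric_mx /eB /flat.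
rewrite !mulmx_block ?mulmx0 ?mul0mx ?mulmx1 ?mul1mx ?addr0 ?add0r mulVmx //.
by rewrite (scalar_mx_block n n) add_block_mx ?addr0 ?add0r.
Qed.

Lemma eB_frame G b K : G \in unitmx ->
  eB K = frame G b *m (1%:M + lower_mx (invmx G *m K^T)) *m coframe G b.
Proof.
move=> uG; rewrite -(eB_coframe b K uG); move: (frameK b uG).
move: (frame G b) (coframe G b) => X Y XY.
by rewrite !mulmxA XY mul1mx -mulmxA XY mulmx1.
Qed.

Lemma gualtieri_frame s G b I J : G \in unitmx -> G^T = G ->
  I *m I = - 1%:M -> J *m J = - 1%:M ->
  I^T *m G *m I = G -> J^T *m G *m J = G ->
  gualtieri s G b I J = 2%:R^-1 *: (frame G b *m gmodel I J s *m coframe G b).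
Proof.
move=> uG GT sqI sqJ compI compJ.
rewrite /gualtieri /flat GT (invmx_omega uG sqI) (invmx_omega uG sqJ).
rewrite (trmx_compatible uG sqI compI) (trmx_compatible uG sqJ compJ) -/(sgn R s).
rewrite /frame /coframe -!mulmxA; congr (_ *: (_ *m _)); rewrite !mulmxA.
congr (_ *m _); rewrite /gmodel /metric_mx !mulmx_block.
do 2 rewrite ?mulmx0 ?mul0mx ?mulmx1 ?mul1mx ?addr0 ?add0r.
rewrite ?mulmxDl ?mulmxBl ?mulmxDr ?mulmxBr ?mulNmx ?mulmxN -?scalemxAl -?scalemxAr ?mulmxA.
by rewrite mulmxDl -scalemxAl !scalerN !opprD !opprK.
Qed.

End Frame.

Lemma bracket_frame (R : realFieldType) (n : nat) s (G b I J K : 'M[R]_n) :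
  G \in unitmx -> G^T = G -> I *m I = - 1%:M -> J *m J = - 1%:M ->
  I^T *m G *m I = G -> J^T *m G *m J = G ->
  commutator (PhiK K (gualtieri s G b I J)) (gualtieri (~~ s) G b I J)
  = 2%:R^-1 ^+ 3 *: (frame G b *m
      commutator (PhiE (1%:M + lower_mx (invmx G *m K^T)) (gmodel I J s))
                 (gmodel I J (~~ s)) *m coframe G b).
Proof.
move=> uG GT sqI sqJ compI compJ.
rewrite !(gualtieri_frame _ b uG GT sqI sqJ compI compJ).
change (PhiK K ?P) with (PhiE (eB K) P); rewrite (eB_frame b K uG).
rewrite PhiE_scale PhiE_conj ?coframeK // commutator_scale.
by rewrite commutator_conj ?coframeK // !exprS expr0 mulr1 mulrA.
Qed.

Lemma commute_iff_Lambda11 (R : realFieldType) (n : nat) (G J K : 'M[R]_n) :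
  G \in unitmx -> J *m J = - 1%:M -> J^T *m G *m J = G -> K^T = - K ->
  J *m (invmx G *m K^T) = invmx G *m K^T *m J <-> in_Lambda11 J K.
Proof.
move=> uG sqJ compJ KT; have JT := trmx_compatible uG sqJ compJ.
rewrite in_Lambda11_mx KT !mulmxN !mulNmx.
split => [/(congr1 -%R) | invK].
  rewrite !opprK => commJ; rewrite JT !mulNmx -!mulmxA (mulmxA (invmx G)) -commJ !mulmxA.
  by rewrite -(mulmxA G J J) sqJ mulmxN mulmx1 !mulNmx opprK mulmxV // mul1mx.
congr (- _); rewrite -{2}invK JT !mulmxA -(mulmxA _ J J) sqJ.
by rewrite !mulmxN !mulNmx mulmx1 opprK !mulmxA mulVmx // mul1mx.
Qed.

Theorem proposition3p3 (R : realFieldType) (n : nat) (G b I J K : 'M[R]_n) :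
  gsymmetric G -> gposdef G ->
  almost_complex I -> almost_complex J ->
  compatible G I -> compatible G J ->
  gskew b -> gskew K ->
  commutator (PhiK K (gualtieri true G b I J)) (gualtieri false G b I J) =
  commutator (PhiK K (gualtieri false G b I J)) (gualtieri true G b I J)
  <-> in_Lambda11 J K.
Proof.
move=> symG posG sqI sqJ compI compJ _ skK.
have uG := gposdef_unit posG.
have [compI' compJ'] := (compatible_mx compI, compatible_mx compJ).
have bracket s := bracket_frame s b K uG (gsymmetric_trmx symG) sqI sqJ compI' compJ'.
rewrite (bracket true) (bracket false) scaled_conj_eq ?coframeK //; last first.
  by rewrite expf_neq0 // invr_eq0 pnatr_eq0.
rewrite gmodel_bracket_symmetric_iff //.
exact: commute_iff_Lambda11 (gskew_trmx skK).
Qed.
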